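(* In the uncensored delayed-feedback bandit model (see context), let $a^*\in\{1,\dots,K\}$ satisfy $\theta_{a^*}\ge\theta_k$ for all $k$, and for any policy let $L(T)=\mathbb{E}[r^*(T)-r(T)]$. Then \[ L(T)=\sum_{s=1}^T\mathbb{E}[\theta_{a^*}-\theta_{A_s}]\,\tau_{T-s}, \] where $\tau_{T-s}=\mathbb{P}(D_s\le T-s)$. Moreover, with $N_k(T)=\sum_{s=1}^T\mathbf{1}\{A_s=k\}$, \[ L(T)\le\sum_{k=1}^K(\theta_{a^*}-\theta_k)\mathbb{E}[N_k(T)], \] and if $\mu=\mathbb{E}[D_s]<\infty$, \[ \sum_{k=1}^K(\theta_{a^*}-\theta_k)\mathbb{E}[N_k(T)]-L(T)\le\mu\sum_{k=1}^K(\theta_{a^*}-\theta_k). \]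
   Context: Uncensored delayed-feedback bandit model: $K$ arms with conversion rates $\theta_1,\dots,\theta_K\in[0,1]$; a delay distribution on $\mathbb{N}=\{0,1,\dots\}$ with CDF $\tau_d=\mathbb{P}(D\le d)$. At each round $t=1,2,\dots$ the learner picks $A_t\in\{1,\dots,K\}$ as a function of past observations; this triggers $C_t\in\{0,1\}$ and $D_t\in\mathbb{N}$, conditionally independent given the past, with $C_t\sim\mathrm{Bernoulli}(\theta_{A_t})$ and $D_t$ with CDF $\tau$. With $X_{s,t}=C_s\mathbf{1}\{D_s\le t-s\}$, at round $t$ the learner observes all $X_{s,t}$, $1\le s\le t$, and receives reward $Y_t=\sum_{s=1}^tC_s\mathbf{1}\{D_s=t-s\}$. $r(T)=\sum_{t=1}^TY_t$ is the learner's cumulated reward and $r^*(T)$ the cumulated reward of an oracle playing $A_t=a^*$ at every round. *)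

From HB Require Import structures.
From mathcomp Require Import all_boot all_order all_algebra.
From mathcomp Require Import all_classical all_reals all_analysis.
Set Implicit Arguments. Unset Strict Implicit. Unset Printing Implicit Defensive.
Import Order.TTheory GRing.Theory Num.Theory.
Local Open Scope classical_set_scope.
Local Open Scope ring_scope.

(* Rounds are t = 1, 2, ...; arms are 'I_K; conversions C t : bool; delays D t : nat. *)

Definition bern {R : realType} (q : R) (c : bool) : R := if c then q else 1 - q.

(* delay distribution given by its pmf p on nat; tau d = P(D <= d) *)
Definition is_pmf {R : realType} (p : nat -> R) : Prop :=
  (forall n, 0 <= p n) /\ (\sum_(0 <= n <oo) (p n)%:E = 1)%E.
Definition cdf_of {R : realType} (p : nat -> R) (d : nat) : R := \sum_(i < d.+1) p i.
Definition mean_of {R : realType} (p : nat -> R) : \bar R :=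
  (\sum_(0 <= n <oo) (n%:R * p n)%:E)%E.

Section Model.
Context {d : measure_display} {Omega : measurableType d} {K : nat}.
Variables (A : nat -> Omega -> 'I_K) (C : nat -> Omega -> bool) (D : nat -> Omega -> nat).

Definition Xobs (s t : nat) (w : Omega) : bool := C s w && (D s w <= t - s)%N.

Definition hist (t : nat) (w : Omega) : nat -> nat -> bool :=
  fun s u => [&& (1 <= s)%N, (s <= u)%N, (u < t)%N & Xobs s u w].

Definition Yrew {R : realType} (t : nat) (w : Omega) : R :=
  \sum_(1 <= s < t.+1) (C s w && (D s w == t - s)%N)%:R.

Definition cumrew {R : realType} (T : nat) (w : Omega) : R :=
  \sum_(1 <= t < T.+1) Yrew t w.

Definition Npulls {R : realType} (k : 'I_K) (T : nat) (w : Omega) : R :=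
  \sum_(1 <= s < T.+1) (A s w == k)%:R.

Definition is_policy : Prop :=
  exists pi : nat -> (nat -> nat -> bool) -> 'I_K,
    forall t w, (1 <= t)%N -> A t w = pi t (hist t w).

(* the atom of the past before the draw of (C_t, D_t):
   (A_s, C_s, D_s)_{s < t} and A_t take prescribed values *)
Definition past (t : nat) (a : nat -> 'I_K) (c : nat -> bool) (dd : nat -> nat) :
  set Omega :=
  [set w | (forall s, (1 <= s < t)%N -> [/\ A s w = a s, C s w = c s & D s w = dd s])
           /\ A t w = a t].

(* the delayed-feedback bandit model: given the whole past (and A_t), C_t and
   D_t are conditionally independent, C_t ~ Bernoulli(theta_{A_t}), D_t ~ p *)
Definition delayed_bandit {R : realType} (P : probability Omega R)
  (theta : 'I_K -> R) (p : nat -> R) : Prop :=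
  [/\ (forall t k, measurable (A t @^-1` [set k])),
      (forall t b, measurable (C t @^-1` [set b])),
      (forall t n, measurable (D t @^-1` [set n])) &
      (forall t a c dd (ct : bool) (dt : nat), (1 <= t)%N ->
         P (past t a c dd `&` [set w | C t w = ct /\ D t w = dt])
         = (P (past t a c dd) * (bern (theta (a t)) ct * p dt)%:E)%E)].
End Model.

From HB Require Import structures.
From mathcomp Require Import all_boot all_order all_algebra.
From mathcomp Require Import all_classical all_reals all_analysis.
From mathcomp Require Import zify measurable_realfun.
Import Order.TTheory GRing.Theory Num.Theory.
Local Open Scope classical_set_scope.
Local Open Scope ring_scope.

(* Integrating out the past one round at a time (each step is a countable
   disjoint union of atoms on which the model's product rule holds) shows that
   the outcome (C_s, D_s) of round s is independent of the arm A_s: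
   P(A_s = k, C_s = 1, D_s = j) = P(A_s = k) theta_k p_j.  The reward collected
   by time T is sum_s sum_(j <= T - s) 1{C_s = 1, D_s = j}, so its expectation
   is sum_s E[theta_(A_s)] tau_(T-s); subtracting from the oracle's gives the
   regret formula.  As tau <= 1 the regret is at most the undelayed one
   sum_s E[gap_(A_s)], and the difference sum_s E[gap_(A_s)] (1 - tau_(T-s)) is
   at most (sum_k gap_k) sum_(j < T) P(D > j) <= mu sum_k gap_k. *)

Lemma sum_triangle_reindex (V : nmodType) (F : nat -> nat -> V) (T : nat) :
  \sum_(1 <= t < T.+1) \sum_(1 <= s < t.+1) F s (t - s)%N =
  \sum_(1 <= s < T.+1) \sum_(j < (T - s).+1) F s j.
Proof.
elim: T => [|T IH]; first by rewrite !big_geq.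
rewrite big_nat_recr //= IH [in LHS](big_nat_recr T.+1) //= subnn.
rewrite [in RHS](big_nat_recr T.+1) //= subnn big_ord1 addrA -big_split /=.
congr (_ + _); apply: eq_big_nat => s /andP[s1 sT].
by rewrite (_ : (T.+1 - s)%N = (T - s).+1) 1?[in RHS]big_ord_recr //; lia.
Qed.

Lemma sum_subn_rev (V : nmodType) (f : nat -> V) (T : nat) :
  \sum_(1 <= s < T.+1) f (T - s)%N = \sum_(j < T) f j.
Proof.
rewrite -(big_mkord xpredT) big_nat_rev big_add1 /=.
by apply: eq_big_nat => j /andP[_ jT]; congr f; lia.
Qed.

Lemma bigcup_measureI_factor {R : realType} {d : measure_display} {T : measurableType d}
    (mu : {measure set T -> \bar R}) (I : countType) (F : I -> set T) (B : set T) (y : R) :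
  measurable B -> (forall i, measurable (F i)) -> trivIset setT F ->
  (forall i, mu (F i `&` B) = (mu (F i) * y%:E)%E) ->
  mu (\bigcup_i F i `&` B) = (mu (\bigcup_i F i) * y%:E)%E.
Proof.
move=> mB mF tF hF.
pose G n := if pickle_inv n is Some i then F i else set0.
have -> : \bigcup_i F i = \bigcup_n G n.
  apply/seteqP; split => w [x _ Fx].
    by exists (pickle x) => //; rewrite /G pickleK_inv.
  by move: Fx; rewrite /G; case: (pickle_inv x) => // i Fi; exists i.
have mG n : measurable (G n) by rewrite /G; case: (pickle_inv n).
have tG : trivIset setT G.
  move=> n m _ _; rewrite /G.
  case En: (pickle_inv n) => [i|]; last by rewrite set0I => -[].
  case Em: (pickle_inv m) => [j|]; last by rewrite setI0 => -[].
  move=> /(tF i j Logic.I Logic.I) ij.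
  by rewrite -(@pickle_invK I n) -(@pickle_invK I m) En Em ij.
rewrite setI_bigcupl !measure_semi_bigcup //; last 4 first.
- exact: bigcup_measurable.
- by move=> n; exact: measurableI (mG n) mB.
- exact: trivIset_setIr.
- by apply: bigcup_measurable => n _; exact: measurableI (mG n) mB.
rewrite muleC -nneseriesZl //; apply: eq_eseriesr => n _; rewrite muleC /G.
by case: (pickle_inv n) => [i|]; rewrite ?hF // set0I measure0 mul0e.
Qed.

Section finite_expectation.
Context {R : realType} {d : measure_display} {T : measurableType d}.
Variable P : probability T R.

Lemma expectation_sum_ge0 {I : Type} (r : seq I) (f : I -> T -> R) :
  (forall i, measurable_fun setT (f i)) -> (forall i w, 0 <= f i w) ->
  ('E_P[fun w => (\sum_(i <- r) f i w)%R] = \sum_(i <- r) 'E_P[f i])%E.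
Proof.
move=> mf f0; rewrite unlock.
under eq_integral do rewrite -sumEFin.
apply: ge0_integral_sum => // i.
- exact/measurable_EFinP.
- by move=> w _; rewrite lee_fin.
Qed.

Lemma expectation_fin_fun {I : finType} (X : T -> I) (g : I -> R) :
  (forall i, 0 <= g i) -> (forall i, measurable (X @^-1` [set i])) ->
  ('E_P[fun w => g (X w)] = (\sum_i g i * fine (P (X @^-1` [set i])))%:E)%E.
Proof.
move=> g0 mX.
have -> : (fun w => g (X w)) = (fun w => \sum_i g i * \1_(X @^-1` [set i]) w).
  apply/funext => w; rewrite (bigD1 (X w)) //= big1 ?addr0 => [|i /negbTE Xi].
    by rewrite indicE mem_set ?mulr1.
  by rewrite indicE memNset ?mulr0 //= => Xwi; rewrite Xwi eqxx in Xi.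
rewrite expectation_sum_ge0 => [|i|i w]; last 2 first.
- by apply: measurable_funM => //; exact: measurable_indic.
- by rewrite mulr_ge0 // indicE ler0n.
rewrite -sumEFin; apply: eq_bigr => i _.
rewrite unlock (integralZl_indic _ (fun=> X @^-1` [set i])) //; last by rewrite ltNge g0.
by rewrite integral_indic // setIT EFinM fineK ?fin_num_measure.
Qed.

Lemma measure_fin_partition {I : finType} (X : T -> I) (E : set T) :
  measurable E -> (forall i, measurable (X @^-1` [set i])) ->
  P E = (\sum_i P (X @^-1` [set i] `&` E))%E.
Proof.
move=> mE mX; rewrite -expectation_indic //.
have -> : \1_E = (fun w => \sum_i \1_(X @^-1` [set i] `&` E) w) :> (T -> R).
  apply/funext => w; rewrite (bigD1 (X w)) //= big1 ?addr0 => [|i /negbTE Xi].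
    by rewrite !indicE in_setI (@mem_set _ (X @^-1` [set X w]) w erefl).
  by rewrite indicE memNset //= => -[Xwi _]; rewrite Xwi eqxx in Xi.
rewrite expectation_sum_ge0 => [|i|i w]; last 2 first.
- exact/measurable_indic/measurableI.
- by rewrite indicE ler0n.
by apply: eq_bigr => i _; rewrite expectation_indic //; apply: measurableI.
Qed.

End finite_expectation.

Section delay_distribution.
Context {R : realType} {p : nat -> R}.
Hypothesis p_pmf : is_pmf p.

Lemma cdf_of_complement (n : nat) :
  (1 - cdf_of p n)%:E = (\sum_(0 <= i <oo) ((n < i)%N%:R * p i)%:E)%E.
Proof.
have [p0 p1] := p_pmf.
rewrite EFinB -p1 (nneseries_split _ n.+1) => [|i _]; last by rewrite lee_fin.
rewrite add0n big_mkord sumEFin -/(cdf_of p n) [X in (X - _)%E]addeC addeK //.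
rewrite eseries_cond eseries_mkcond.
by apply: eq_eseriesr => i _; case: ltnP; rewrite ?mul1r ?mul0r.
Qed.

Lemma cdf_of_le1 (n : nat) : cdf_of p n <= 1.
Proof.
rewrite -subr_ge0 -lee_fin cdf_of_complement.
by apply: nneseries_ge0 => i _ _; rewrite lee_fin mulr_ge0 ?p_pmf.1.
Qed.

Lemma sum_complement_cdf_le_mean (T : nat) :
  ((\sum_(j < T) (1 - cdf_of p j))%:E <= mean_of p)%E.
Proof.
have p0 := p_pmf.1.
have count_lt i : \sum_(j < T) (j < i)%N%:R <= i%:R :> R.
  rewrite -natr_sum ler_nat.
  suff -> : (\sum_(j < T) (j < i)%N = minn T i)%N by rewrite geq_minr.
  elim: T => [|T IH]; first by rewrite big_ord0 min0n.
  by rewrite big_ord_recr /= IH; case: ltnP => Ti; lia.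
rewrite -sumEFin; under eq_bigr do rewrite cdf_of_complement.
rewrite -nneseries_sum.
  apply: lee_nneseries => [i _ _|i _].
    by apply: sume_ge0 => j _; rewrite lee_fin mulr_ge0.
  by rewrite sumEFin -mulr_suml lee_fin ler_wpM2r.
by move=> j i _; rewrite lee_fin mulr_ge0.
Qed.

Lemma delayed_sum_deficit_le (e : nat -> R) (M : R) (T : nat) :
  (forall s, 0 <= e s <= M) ->
  ((\sum_(1 <= s < T.+1) e s)%:E - (\sum_(1 <= s < T.+1) e s * cdf_of p (T - s))%:E
     <= mean_of p * M%:E)%E.
Proof.
move=> e0M; rewrite -EFinB -sumrB muleC.
apply: (@le_trans _ _ (M%:E * (\sum_(j < T) (1 - cdf_of p j))%:E)%E).
  rewrite -EFinM lee_fin -(sum_subn_rev _ (fun j => 1 - cdf_of p j)) mulr_sumr.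
  apply: ler_sum => s _; have /andP[e0 eM] := e0M s.
  by rewrite -[X in X - _]mulr1 -mulrBr ler_wpM2r ?subr_ge0 ?cdf_of_le1.
apply: lee_wpmul2l; last exact: sum_complement_cdf_le_mean.
by have /andP[e0 eM] := e0M 0%N; rewrite lee_fin (le_trans e0 eM).
Qed.

End delay_distribution.

Definition arm_prob {R : realType} {d : measure_display} {Omega : measurableType d}
    {K : nat} (P : probability Omega R) (A : nat -> Omega -> 'I_K) (s : nat) (k : 'I_K)
    : R :=
  fine (P (A s @^-1` [set k])).

Section delayed_bandit_model.
Context {R : realType} {d : measure_display} {Omega : measurableType d} {K : nat}.
Context {P : probability Omega R}.
Context {A : nat -> Omega -> 'I_K} {C : nat -> Omega -> bool} {D : nat -> Omega -> nat}.
Context {theta : 'I_K -> R} {p : nat -> R}.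
Hypothesis model : delayed_bandit A C D P theta p.

Let measurable_arm t k : measurable (A t @^-1` [set k]).
Proof. by case: model. Qed.

Definition round_outcome (t : nat) (ct : bool) (dt : nat) : set Omega :=
  [set w | C t w = ct /\ D t w = dt].

Lemma measurable_round_outcome t ct dt : measurable (round_outcome t ct dt).
Proof. by case: model => _ mC mD _; exact: measurableI (mC t ct) (mD t dt). Qed.

(* [recent_past 0 t] is [past t] and [recent_past t.-1 t] is the event
   [A t = a t]; increasing m integrates out one round of the past at a time. *)
Definition recent_past (m t : nat) (a : nat -> 'I_K) (c : nat -> bool)
    (dd : nat -> nat) : set Omega :=
  [set w | (forall s, (m < s < t)%N -> [/\ A s w = a s, C s w = c s & D s w = dd s])
           /\ A t w = a t].

Lemma measurable_recent_past m t a c dd : measurable (recent_past m t a c dd).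
Proof.
have [_ mC mD _] := model.
pose F s := if (m < s < t)%N then
  A s @^-1` [set a s] `&` (C s @^-1` [set c s] `&` D s @^-1` [set dd s]) else setT.
have -> : recent_past m t a c dd = \bigcap_s F s `&` A t @^-1` [set a t].
  apply/seteqP; split => w [past_w At]; split => // s; rewrite /F.
    by case: ifP => // /past_w [].
  by move=> mst; have := past_w s Logic.I; rewrite /F mst => -[? []].
apply: measurableI => //; apply: bigcapT_measurable => s; rewrite /F.
by case: ifP => // _; do 2 apply: measurableI => //.
Qed.

Lemma recent_past_succ m t a c dd : (m.+1 < t)%N ->
  recent_past m.+1 t a c dd =
  \bigcup_(x : 'I_K * bool * nat) recent_past m t [eta a with m.+1 |-> x.1.1]
                                   [eta c with m.+1 |-> x.1.2] [eta dd with m.+1 |-> x.2].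
Proof.
move=> mt; have tm : (t == m.+1) = false by rewrite gtn_eqF.
apply/seteqP; split => w /=.
  move=> [past_w At]; exists (A m.+1 w, C m.+1 w, D m.+1 w) => //.
  split=> /= [s /andP[ms st]|]; last by rewrite tm.
  case: eqP => [->|/eqP sm] //; apply: past_w.
  by rewrite st andbT ltn_neqAle eq_sym sm.
move=> [x _ [past_w]] /=; rewrite tm => At; split => // s /andP[ms st].
have := past_w s; rewrite (ltn_trans (ltnSn m) ms) st /= gtn_eqF //.
by apply.
Qed.

Lemma recent_past_factor m t a c dd ct dt : (1 <= t)%N ->
  P (recent_past m t a c dd `&` round_outcome t ct dt) =
  (P (recent_past m t a c dd) * (bern (theta (a t)) ct * p dt)%:E)%E.
Proof.
move=> t1; elim: m a c dd => [|m IH] a c dd; first by case: model => _ _ _; apply.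
have [mt|tm] := ltnP m.+1 t; last first.
  suff -> : recent_past m.+1 t a c dd = recent_past m t a c dd by exact: IH.
  by apply/seteqP; split => w [past_w At]; split => // s /andP[]; lia.
rewrite recent_past_succ //; apply: bigcup_measureI_factor.
- exact: measurable_round_outcome.
- by move=> x; exact: measurable_recent_past.
- move=> [[a1 c1] d1] [[a2 c2] d2] _ _ [w [[past_1 _] [past_2 _]]].
  have mst : (m < m.+1 < t)%N by rewrite ltnSn.
  have [] := past_1 _ mst; have [] := past_2 _ mst; rewrite /= eqxx.
  by move=> <- <- <- <- <- <-.
- by move=> x /=; rewrite IH /= gtn_eqF.
Qed.

Lemma arm_outcome_indep t k ct dt : (1 <= t)%N ->
  P (A t @^-1` [set k] `&` round_outcome t ct dt) =
  (P (A t @^-1` [set k]) * (bern (theta k) ct * p dt)%:E)%E.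
Proof.
move=> t1; have := recent_past_factor t.-1 t (fun=> k) (fun=> false) (fun=> 0%N) ct dt t1.
suff -> : recent_past t.-1 t (fun=> k) (fun=> false) (fun=> 0%N) = A t @^-1` [set k] by [].
apply/seteqP; split => w /=; first by case.
by move=> Atk; split => // s /andP[]; lia.
Qed.

Lemma arm_probE s k : P (A s @^-1` [set k]) = (arm_prob P A s k)%:E.
Proof. by rewrite fineK ?fin_num_measure. Qed.

Lemma arm_prob_ge0 s k : 0 <= arm_prob P A s k.
Proof. exact: fine_ge0. Qed.

Lemma arm_prob_le1 s k : arm_prob P A s k <= 1.
Proof. by rewrite -lee_fin -arm_probE probability_le1. Qed.

Lemma sum_arm_prob s : \sum_k arm_prob P A s k = 1.
Proof.
apply: EFin_inj; rewrite -sumEFin.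
transitivity (\sum_k P (A s @^-1` [set k] `&` setT))%E.
  by apply: eq_bigr => k _; rewrite setIT arm_probE.
by rewrite -measure_fin_partition // probability_setT.
Qed.

Lemma expectation_Npulls k T :
  ('E_P[Npulls A k T] = (\sum_(1 <= s < T.+1) arm_prob P A s k)%:E)%E.
Proof.
have -> : Npulls (R:=R) A k T = (fun w => \sum_(1 <= s < T.+1) \1_(A s @^-1` [set k]) w).
  apply/funext => w; apply: eq_bigr => s _.
  by rewrite indicE; case: eqP => Ask; [rewrite mem_set | rewrite memNset].
rewrite expectation_sum_ge0 => [|s|s w]; last 2 first.
- exact/measurable_indic.
- by rewrite indicE ler0n.
by rewrite -sumEFin; apply: eq_bigr => s _; rewrite expectation_indic // arm_probE.
Qed.

Lemma round_outcome_prob s j : (1 <= s)%N ->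
  P (round_outcome s true j) = ((\sum_k theta k * arm_prob P A s k) * p j)%:E.
Proof.
move=> s1; rewrite (measure_fin_partition P (A s) _ (measurable_round_outcome _ _ _)) //.
rewrite mulr_suml -sumEFin; apply: eq_bigr => k _.
by rewrite arm_outcome_indep // arm_probE -EFinM /= mulrCA mulrA.
Qed.

Lemma cumrew_indicE T :
  cumrew C D T = (fun w => \sum_(1 <= s < T.+1) \sum_(j < (T - s).+1)
                             \1_(round_outcome s true j) w) :> (Omega -> R).
Proof.
apply/funext => w; rewrite /cumrew /Yrew.
rewrite (sum_triangle_reindex _ (fun s j => (C s w && (D s w == j))%:R)).
apply: eq_bigr => s _; apply: eq_bigr => j _; rewrite indicE.
congr (nat_of_bool _)%:R.
by apply/andP/idP => [[Cw /eqP Dw] | /set_mem [-> ->]]; first exact/mem_set.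
Qed.

Lemma expectation_cumrew T :
  ('E_P[cumrew C D T] =
   (\sum_(1 <= s < T.+1) (\sum_k theta k * arm_prob P A s k) * cdf_of p (T - s))%:E)%E.
Proof.
rewrite cumrew_indicE (expectation_sum_ge0 P _
    (fun s w => \sum_(j < (T - s).+1) \1_(round_outcome s true j) w)) => [|s|s w];
  last 2 first.
- apply: measurable_sum => j; exact/measurable_indic/measurable_round_outcome.
- by apply: sumr_ge0 => j _; rewrite indicE ler0n.
rewrite -sumEFin; apply: eq_big_nat => s /andP[s1 _].
rewrite expectation_sum_ge0 => [|j|j w]; last 2 first.
- exact/measurable_indic/measurable_round_outcome.
- by rewrite indicE ler0n.
rewrite /cdf_of mulr_sumr -sumEFin; apply: eq_bigr => j _.
rewrite -round_outcome_prob //.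
exact: expectation_indic (measurable_round_outcome _ _ _).
Qed.

Lemma sum_arm_probB (f : 'I_K -> R) (c : R) s :
  \sum_k (c - f k) * arm_prob P A s k = c - \sum_k f k * arm_prob P A s k.
Proof.
rewrite -[in RHS](mulr1 c) -(sum_arm_prob s) mulr_sumr -sumrB.
by apply: eq_bigr => k _; rewrite mulrBl.
Qed.

Lemma sum_arm_prob_const (f : 'I_K -> R) s a :
  (forall w, A s w = a) -> \sum_k f k * arm_prob P A s k = f a.
Proof.
move=> Asa; have arm_prob_a k : arm_prob P A s k = (k == a)%:R.
  rewrite /arm_prob; case: eqP => [->|ka].
    suff -> : A s @^-1` [set a] = setT by rewrite probability_setT.
    by apply/seteqP; split => w //= _; rewrite /preimage /= Asa.
  suff -> : A s @^-1` [set k] = set0 by rewrite measure0.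
  by apply/seteqP; split => w //=; rewrite /preimage /= Asa => ak; case: ka.
rewrite (bigD1 a) //= big1 => [|k /negbTE ka]; rewrite arm_prob_a ?ka ?mulr0 //.
by rewrite eqxx mulr1 addr0.
Qed.

End delayed_bandit_model.

Theorem lemma1 (R : realType) (K : nat) (theta : 'I_K -> R) (p : nat -> R)
  (astar : 'I_K)
  (* learner's process *)
  (d : measure_display) (Omega : measurableType d) (P : probability Omega R)
  (A : nat -> Omega -> 'I_K) (C : nat -> Omega -> bool) (D : nat -> Omega -> nat)
  (* oracle's process (always plays astar) *)
  (d' : measure_display) (Omega' : measurableType d') (P' : probability Omega' R)
  (A' : nat -> Omega' -> 'I_K) (C' : nat -> Omega' -> bool) (D' : nat -> Omega' -> nat)
  (T : nat) :
  (forall k, 0 <= theta k <= 1) ->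
  is_pmf p ->
  (forall k, theta k <= theta astar) ->
  is_policy A C D ->
  delayed_bandit A C D P theta p ->
  (forall t w, (1 <= t)%N -> A' t w = astar) ->
  delayed_bandit A' C' D' P' theta p ->
  let L := ('E_P'[cumrew C' D' T] - 'E_P[cumrew C D T])%E in
  let G := (\sum_(k < K) (theta astar - theta k)%:E * 'E_P[Npulls A k T])%E in
  [/\ L = (\sum_(1 <= s < T.+1)
              'E_P[fun w => (theta astar - theta (A s w))%R] * (cdf_of p (T - s))%:E)%E,
      (L <= G)%E &
      ((mean_of p < +oo)%E ->
         (G - L <= mean_of p * (\sum_(k < K) (theta astar - theta k))%:E)%E)].
Proof.
move=> _ p_pmf best _ model oracle model' L G.
pose gap k := theta astar - theta k.
pose e s := \sum_k gap k * arm_prob P A s k.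
have e_ge0 s : 0 <= e s.
  by apply: sumr_ge0 => k _; rewrite mulr_ge0 ?arm_prob_ge0 ?subr_ge0.
have hL : L = (\sum_(1 <= s < T.+1) e s * cdf_of p (T - s))%:E.
  rewrite /L (expectation_cumrew model') (expectation_cumrew model) -EFinB -sumrB.
  congr _%:E; apply: eq_big_nat => s /andP[s1 _].
  rewrite (sum_arm_prob_const _ _ astar) => [|w]; last exact: oracle.
  by rewrite /e /gap (sum_arm_probB model) mulrBl.
have hG : G = (\sum_(1 <= s < T.+1) e s)%:E.
  rewrite /G; under eq_bigr do rewrite (expectation_Npulls model) -EFinM.
  by rewrite sumEFin /e exchange_big; congr _%:E; apply: eq_bigr => k _; rewrite mulr_sumr.
split.
- rewrite hL -sumEFin; apply: eq_bigr => s _.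
  rewrite (expectation_fin_fun P (A s) gap) -?EFinM // => k; last by case: model.
  by rewrite subr_ge0.
- rewrite hL hG lee_fin; apply: ler_sum => s _.
  exact: ler_piMr (e_ge0 s) (cdf_of_le1 p_pmf _).
- move=> _; rewrite hL hG; apply: (delayed_sum_deficit_le p_pmf) => s; rewrite e_ge0 /=.
  by apply: ler_sum => k _; rewrite ler_piMr ?(arm_prob_le1 model) ?subr_ge0.
Qed.
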